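(* Let $n\ge2$ and $0<c\le\frac1n$. Set $\delta=\frac1n+\frac{\sqrt{-(n^2-1)(c^4-c^2)}}{n(c^2-1)}$. Then $0\le\delta<\frac1n$, and the set $\mathcal P^\delta$ of columns of the matrix $P^\delta$ (with $[P^\delta]_1=d_1$ and $[P^\delta]_i=\alpha(d_i+\delta e_1)$ for $2\le i\le n+1$, $\alpha=\frac{n}{\sqrt{n^2\delta^2-2n\delta+n^2}}$, where $[d_1\ \cdots\ d_{n+1}]$ is the canonical uniform simplex) is a positive basis of $\mathbb R^n$ with cosine measure $c$.
   Context: The canonical uniform simplex is the $n\times(n+1)$ matrix defined as follows, with $a_i=\sqrt{\frac{(n-i+1)(n+1)}{n(n-i+2)}}$ for $i=1,\dots,n$: for $1\le j\le n$, column $j$ has entry $-\frac{a_i}{n-i+1}$ in row $i<j$, entry $a_j$ in row $j$, and $0$ in rows $i>j$; column $n+1$ has entry $-\frac{a_i}{n-i+1}$ in every row $i$. A finite set $\mathcal P$ is a positive basis if its positive span $\{\sum\lambda_id_i:\lambda_i\ge0\}$ is $\mathbb R^n$ and no $d\in\mathcal P$ lies in the positive span of $\mathcal P\setminus\{d\}$. The cosine measure of a finite $\mathcal S\subset\mathbb R^n\setminus\{\mathbf 0\}$ is $\min_{\|u\|=1}\max_{d\in\mathcal S}\frac{d^\top u}{\|d\|}$. *)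

From HB Require Import structures.
From mathcomp Require Import all_boot all_order all_algebra.
From mathcomp Require Import reals.
Set Implicit Arguments. Unset Strict Implicit. Unset Printing Implicit Defensive.
Import Order.TTheory GRing.Theory Num.Theory.
Local Open Scope ring_scope.

Section Defs.
Variable R : realType.

Definition dotv (n : nat) (u v : 'cV[R]_n) : R := \sum_(k < n) u k 0 * v k 0.
Definition normv (n : nat) (u : 'cV[R]_n) : R := Num.sqrt (dotv u u).

Definition pos_span (n m : nat) (f : 'I_m -> 'cV[R]_n) (P : pred 'I_m)
  (v : 'cV[R]_n) : Prop :=
  exists lam : 'I_m -> R, (forall i, 0 <= lam i) /\ v = \sum_(i < m | P i) lam i *: f i.

(* The SET {f i | i} is a positive basis of R^n:
   its positive span is R^n and no element d lies in the positive span
   of the set minus d (i.e. of the f j with f j <> d). *)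
Definition positive_basis (n m : nat) (f : 'I_m -> 'cV[R]_n) : Prop :=
  (forall v : 'cV[R]_n, pos_span f predT v) /\
  (forall i : 'I_m, ~ pos_span f (fun j => f j != f i) (f i)).

Definition cos_max (n m : nat) (f : 'I_m.+1 -> 'cV[R]_n) (u : 'cV[R]_n) : R :=
  let g := fun i => dotv (f i) u / normv (f i) in
  \big[Num.max/g ord0]_(i < m.+1) g i.

(* "the cosine measure of the set {f i} equals c", i.e.
   min_{||u||=1} max_i (f i)^T u / ||f i|| = c  (minimum attained and equal to c) *)
Definition cosine_measure_is (n m : nat) (f : 'I_m.+1 -> 'cV[R]_n) (c : R) : Prop :=
  (exists u : 'cV[R]_n, normv u = 1 /\ cos_max f u = c) /\
  (forall u : 'cV[R]_n, normv u = 1 -> c <= cos_max f u).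

(* a_i, with 0-based row index i0 = i - 1:  a_i = sqrt((n-i+1)(n+1)/(n(n-i+2))) *)
Definition simplex_a (n : nat) (i0 : nat) : R :=
  Num.sqrt (((n - i0)%:R * n.+1%:R) / (n%:R * (n - i0).+1%:R)).

(* canonical uniform simplex, n x (n+1), 0-based indices:
   entry (i,j) = -a_i/(n-i+1) if i<j (1-based), a_j if i=j, 0 if i>j;
   the last column (j = n, 0-based) has -a_i/(n-i+1) in every row. *)
Definition unif_simplex (n : nat) : 'M[R]_(n, n.+1) :=
  \matrix_(i < n, j < n.+1)
    if (i < j)%N then - simplex_a n i / (n - i)%:R
    else if (i == j :> nat) then simplex_a n i else 0.

Definition e1 (n : nat) : 'cV[R]_n := \col_(k < n) (if (k == 0 :> nat) then 1 else 0).

Definition alpha_of (n : nat) (delta : R) : R :=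
  n%:R / Num.sqrt (n%:R ^+ 2 * delta ^+ 2 - 2 * n%:R * delta + n%:R ^+ 2).

Definition Pdelta_col (n : nat) (delta : R) (j : 'I_n.+1) : 'cV[R]_n :=
  if (j == 0 :> nat) then col j (unif_simplex n)
  else alpha_of n delta *: (col j (unif_simplex n) + delta *: e1 n).

Definition delta_of (n : nat) (c : R) : R :=
  1 / n%:R + Num.sqrt (- ((n%:R ^+ 2 - 1) * (c ^+ 4 - c ^+ 2))) / (n%:R * (c ^+ 2 - 1)).

End Defs.

Arguments Pdelta_col {R} n delta j.
Arguments e1 {R} n.
Arguments unif_simplex {R} n.
Arguments alpha_of {R} n delta.
Arguments simplex_a {R} n i0.

From HB Require Import structures.
From mathcomp Require Import all_boot all_order all_algebra.
From mathcomp Require Import reals ring lra zify.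
Import Order.TTheory GRing.Theory Num.Theory.
Local Open Scope ring_scope.
Set Implicit Arguments. Unset Strict Implicit. Unset Printing Implicit Defensive.

(* The columns d_0, ..., d_n of the uniform simplex are unit vectors with
   pairwise inner products -1/n; they sum to zero and form a tight frame,
   sum_j (d_j . v) d_j = (n+1)/n v.  The columns p_j of P^delta are unit vectors
   (this is what alpha is for) with pairwise non-positive inner products, so none
   of them is a positive combination of the others; the frame makes them span,
   and the positive relation alpha (1 - n delta) p_0 + sum_(j>0) p_j = 0 upgrades
   spanning to positive spanning.
   Put c = alpha (1/n - delta).  The unit vector u = -d_0 has p_0 . u = -1 and
   p_j . u = c for j > 0.  If some unit u had p_j . u < c for all j, then with
   t = p_0 . u the n numbers y_j = p_j . u + c t would be < c (1 + t), sum to 0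
   and have square sum alpha^2 (n+1)/n (1 - t^2), whereas numbers that sum to 0
   and are bounded by M have square sum at most n (n-1) M^2; together with
   t < c <= 1/n this is impossible.  Finally, delta_of n c is the delta in
   [0, 1/n) solving alpha (1/n - delta) = c. *)

Section DotProduct.
Variables (R : realType) (n : nat).
Implicit Types (u v w : 'cV[R]_n) (a : R).

Lemma dotvC u v : dotv u v = dotv v u.
Proof. by apply: eq_bigr => k _; rewrite mulrC. Qed.

Lemma dotvDr u v w : dotv u (v + w) = dotv u v + dotv u w.
Proof. by rewrite /dotv -big_split; apply: eq_bigr => k _; rewrite mxE mulrDr. Qed.

Lemma dotvZr a u v : dotv u (a *: v) = a * dotv u v.
Proof. by rewrite /dotv mulr_sumr; apply: eq_bigr => k _; rewrite mxE mulrCA. Qed.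

Lemma dotvNr u v : dotv u (- v) = - dotv u v.
Proof. by rewrite -scaleN1r dotvZr mulN1r. Qed.

Lemma dotv_sumr m (P : pred 'I_m) u (F : 'I_m -> 'cV[R]_n) :
  dotv u (\sum_(i < m | P i) F i) = \sum_(i < m | P i) dotv u (F i).
Proof.
rewrite /dotv (exchange_big _ _ _ P xpredT) /=; apply: eq_bigr => k _.
by rewrite summxE mulr_sumr.
Qed.

Lemma dotvDl u v w : dotv (v + w) u = dotv v u + dotv w u.
Proof. by rewrite dotvC dotvDr !(dotvC u). Qed.

Lemma dotvZl a u v : dotv (a *: v) u = a * dotv v u.
Proof. by rewrite dotvC dotvZr dotvC. Qed.

Lemma dotvNl u v : dotv (- v) u = - dotv v u.
Proof. by rewrite dotvC dotvNr dotvC. Qed.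

Lemma dotv_suml m (P : pred 'I_m) u (F : 'I_m -> 'cV[R]_n) :
  dotv (\sum_(i < m | P i) F i) u = \sum_(i < m | P i) dotv (F i) u.
Proof. by rewrite dotvC dotv_sumr; apply: eq_bigr => i _; rewrite dotvC. Qed.

Lemma dotvvE u : dotv u u = normv u ^+ 2.
Proof. by rewrite sqr_sqrtr //; apply: sumr_ge0 => k _; rewrite -expr2 sqr_ge0. Qed.

End DotProduct.

Section PositiveSpanning.
Variables (R : realType) (n m : nat) (f : 'I_m -> 'cV[R]_n).

Lemma pos_spanT_of_pos_relation (gam : 'I_m -> R) :
  (forall v, exists beta : 'I_m -> R, v = \sum_(i < m) beta i *: f i) ->
  (forall i, 0 < gam i) -> \sum_(i < m) gam i *: f i = 0 ->
  forall v, pos_span f predT v.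
Proof.
move=> span gam_gt0 rel v; have [beta ->] := span v.
pose t := \sum_(k < m) `|beta k| / gam k.
exists (fun i => beta i + t * gam i); split=> [i|].
  have : `|beta i| / gam i <= t.
    by rewrite /t (bigD1 i) //= lerDl; apply: sumr_ge0 => k _; rewrite divr_ge0 // ltW.
  rewrite ler_pdivrMr // => le_beta; have := ler_norm (- beta i); rewrite normrN; lra.
rewrite [RHS](eq_bigr (fun i => beta i *: f i + t *: (gam i *: f i))); last first.
  by move=> i _; rewrite scalerDl scalerA.
by rewrite big_split /= -scaler_sumr rel scaler0 addr0.
Qed.

Lemma not_pos_span_of_obtuse i :
  (forall j, j != i -> dotv (f i) (f j) <= 0) -> 0 < dotv (f i) (f i) ->
  ~ pos_span f (fun j => f j != f i) (f i).
Proof.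
move=> obtuse fi_gt0 [lam [lam_ge0 fiE]].
suff : dotv (f i) (f i) <= 0 by rewrite leNgt fi_gt0.
rewrite {2}fiE dotv_sumr; apply: sumr_le0 => j fj_neq; rewrite dotvZr.
by rewrite mulr_ge0_le0 // obtuse //; apply: contraNneq fj_neq => ->.
Qed.

End PositiveSpanning.

Lemma sum_sqr_le_of_sum_eq0 (R : realFieldType) m (x : 'I_m -> R) M :
  (forall i, x i <= M) -> \sum_(i < m) x i = 0 ->
  \sum_(i < m) x i ^+ 2 <= m%:R * (m%:R - 1) * M ^+ 2.
Proof.
move=> x_le sum_x0; pose y i := M - x i.
have y_ge0 i : 0 <= y i by rewrite subr_ge0.
have sum_y : \sum_(i < m) y i = m%:R * M.
  by rewrite sumrB sum_x0 subr0 sumr_const card_ord mulr_natl.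
have sum_y2 : \sum_(i < m) y i ^+ 2 <= (\sum_(i < m) y i) ^+ 2.
  rewrite [X in _ <= X]expr2 mulr_suml; apply: ler_sum => i _.
  rewrite expr2 ler_wpM2l // (bigD1 i) //= lerDl.
  by apply: sumr_ge0 => j _.
have sum_y2E : \sum_(i < m) y i ^+ 2 = \sum_(i < m) x i ^+ 2 + m%:R * M ^+ 2.
  rewrite (eq_bigr (fun i => M ^+ 2 - 2 * M * x i + x i ^+ 2)) => [|i _]; last first.
    by rewrite /y; ring.
  rewrite !big_split /= sumrN -[\sum_(i < m) 2 * M * x i]mulr_sumr sum_x0.
  by rewrite sumr_const card_ord; ring.
by move: sum_y2; rewrite sum_y sum_y2E; lra.
Qed.

Lemma cos_measure_ineq (R : realFieldType) (N c t : R) :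
  2 <= N -> 0 < c -> N * c <= 1 -> -1 < t -> t < c ->
  ((N - 1) * c * (1 + t)) ^+ 2 < (1 - t ^+ 2) * (1 - c ^+ 2).
Proof.
move=> N_ge2 c_gt0 Nc_le1 t_gtN1 t_lt_c; have Nc_ge0 : 0 <= (N - 1) * c by nra.
have : ((N - 1) * c * (1 + t)) ^+ 2 <= ((1 - c) * (1 + t)) ^+ 2.
  by rewrite ler_sqr ?nnegrE; nra.
have : ((1 - c) * (1 + t)) ^+ 2 < (1 - t ^+ 2) * (1 - c ^+ 2).
  have -> : (1 - t ^+ 2) * (1 - c ^+ 2) = (1 - c) * (1 + t) * ((1 - t) * (1 + c)) by ring.
  by rewrite expr2 ltr_pM2l; nra.
lra.
Qed.

Lemma sum_nat_split_at (V : nmodType) (N k : nat) (F : nat -> V) : (k < N)%N ->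
  \sum_(j < N) F j = \sum_(0 <= j < k) F j + F k + \sum_(k.+1 <= j < N) F j.
Proof.
move=> lt_kN; rewrite -(big_mkord xpredT) (big_cat_nat (n := k)) //=; last exact: ltnW.
by rewrite [X in _ + X](big_cat_nat (n := k.+1)) //= big_nat1 addrA.
Qed.

Section SimplexEntries.
Variables (R : realType) (n : nat).
Hypothesis n_gt0 : (0 < n)%N.

(* The entries of [unif_simplex] at nat indices, so that sums over a row or a
   column can be cut along nat ranges. *)
Definition simplex_entry (k j : nat) : R :=
  if (k < j)%N then - simplex_a n k / (n - k)%:R
  else if k == j then simplex_a n k else 0.

Let nR_neq0 : n%:R != 0 :> R. Proof. by rewrite pnatr_eq0 -lt0n. Qed.

Let nk_neq0 k : (k < n)%N -> (n - k)%:R != 0 :> R.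
Proof. by move=> lt_kn; rewrite pnatr_eq0 subn_eq0 -ltnNge. Qed.

Lemma simplex_entry_eq0 k j : (j < k)%N -> simplex_entry k j = 0.
Proof. by move=> lt_jk; rewrite /simplex_entry ltnNge (ltnW lt_jk) gtn_eqF. Qed.

Lemma simplex_a_sqr k :
  simplex_a n k ^+ 2 = (n - k)%:R * (n%:R + 1) / (n%:R * ((n - k)%:R + 1)) :> R.
Proof. by rewrite sqr_sqrtr ?divr_ge0 ?mulr_ge0 // -!natr1. Qed.

Lemma simplex_row_mul_sum k (F : nat -> R) : (k < n)%N ->
  \sum_(j < n.+1) simplex_entry k j * F j =
  simplex_a n k * F k - simplex_a n k / (n - k)%:R * \sum_(k.+1 <= j < n.+1) F j.
Proof.
move=> lt_kn.
rewrite (@sum_nat_split_at _ n.+1 k (fun j => simplex_entry k j * F j) (ltnW lt_kn)).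
rewrite big_nat_cond big1 ?add0r => [|j /andP[/andP[_ lt_jk] _]]; last first.
  by rewrite simplex_entry_eq0 ?mul0r.
rewrite /simplex_entry ltnn eqxx mulr_sumr -sumrN; congr (_ + _).
by apply: eq_big_nat => j /andP[lt_kj _]; rewrite lt_kj !mulNr.
Qed.

Lemma simplex_row_sum k : (k < n)%N -> \sum_(j < n.+1) simplex_entry k j = 0.
Proof.
move=> lt_kn; have := simplex_row_mul_sum (fun=> 1) lt_kn.
under eq_bigr do rewrite mulr1.
by move=> ->; rewrite sumr_const_nat subSS mulr1 divfK ?subrr ?nk_neq0.
Qed.

Lemma simplex_row_dot k l : (k < n)%N -> (l < n)%N ->
  \sum_(j < n.+1) simplex_entry k j * simplex_entry l j =
  if k == l then (n%:R + 1) / n%:R else 0.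
Proof.
wlog le_kl : k l / (k <= l)%N => [hwlog|lt_kn lt_ln].
  move=> lt_kn lt_ln; case: (leqP k l) => [|/ltnW] le; first exact: hwlog.
  by rewrite eq_sym -hwlog //; apply: eq_bigr => j _; rewrite mulrC.
rewrite simplex_row_mul_sum //; case: eqVneq => [<-|neq_kl].
  rewrite (eq_big_nat _ _ (F2 := fun=> - simplex_a n k / (n - k)%:R : R)); last first.
    by move=> j /andP[lt_kj _]; rewrite /simplex_entry lt_kj.
  rewrite /simplex_entry ltnn eqxx sumr_const_nat subSS -[_ *+ _]mulr_natr.
  have nk1_neq0 : (n - k)%:R + 1 != 0 :> R by rewrite natr1 pnatr_eq0.
  transitivity (simplex_a n k ^+ 2 * (1 + 1 / (n - k)%:R) : R); first by field; rewrite nk_neq0.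
  by rewrite simplex_a_sqr; field; rewrite nR_neq0 nk_neq0.
have lt_kl : (k < l)%N by rewrite ltn_neqAle neq_kl.
rewrite simplex_entry_eq0 // mulr0 add0r.
suff -> : \sum_(k.+1 <= j < n.+1) simplex_entry l j = 0 by rewrite mulr0 oppr0.
rewrite -[RHS](simplex_row_sum lt_ln) (@sum_nat_split_at _ n.+1 k) 1?ltnW //.
rewrite simplex_entry_eq0 // addr0 [X in _ = X + _]big_nat_cond [X in _ = X + _]big1 ?add0r //.
move=> j /andP[/andP[_ lt_jk] _].
by rewrite simplex_entry_eq0 // (ltn_trans lt_jk).
Qed.

Lemma sum_sqr_simplex_col_above i : (i <= n)%N ->
  \sum_(0 <= k < i) (simplex_a n k / (n - k)%:R) ^+ 2
    = (n%:R + 1) / (n%:R * ((n - i)%:R + 1)) - 1 / n%:R :> R.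
Proof.
elim: i => [_|i IHi lt_in].
  by rewrite big_nil subn0; field; rewrite nR_neq0 natr1 pnatr_eq0.
rewrite big_nat_recr //= IHi 1?ltnW // expr_div_n simplex_a_sqr -subnSK //.
have ni1_neq0 : (n - i.+1)%:R + 1 != 0 :> R by rewrite natr1 pnatr_eq0.
have ni2_neq0 : (n - i.+1)%:R + 1 + 1 != 0 :> R by rewrite !natr1 pnatr_eq0.
by rewrite -natr1; field; rewrite nR_neq0 ni1_neq0 ni2_neq0.
Qed.

Lemma simplex_col_dot i j : (i <= j)%N -> (j <= n)%N ->
  \sum_(k < n) simplex_entry k i * simplex_entry k j = if i == j then 1 else - 1 / n%:R.
Proof.
move=> le_ij le_jn; have le_in := leq_trans le_ij le_jn.
rewrite -(big_mkord xpredT (fun k => simplex_entry k i * simplex_entry k j)).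
rewrite (big_cat_nat (n := i)) //=.
rewrite (eq_big_nat _ _ (F2 := fun k => (simplex_a n k / (n - k)%:R) ^+ 2 : R)); last first.
  move=> k /andP[_ lt_ki]; rewrite /simplex_entry lt_ki (leq_trans lt_ki le_ij).
  by rewrite -sqrrN expr2 !mulNr.
rewrite sum_sqr_simplex_col_above //; case: (ltnP i n) => [lt_in|le_ni]; last first.
  have [-> ->] : i = n /\ j = n by split; apply/eqP; rewrite eqn_leq ?le_ni; lia.
  by rewrite big_geq // subnn eqxx addr0; field.
rewrite big_ltn // big_nat_cond big1 ?addr0 => [|k /andP[/andP[lt_ik _] _]]; last first.
  by rewrite simplex_entry_eq0 ?mul0r.
have ni1_neq0 : (n - i)%:R + 1 != 0 :> R by rewrite natr1 pnatr_eq0.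
rewrite /simplex_entry ltnn eqxx; move: le_ij; rewrite leq_eqVlt => /orP[/eqP <-|lt_ij].
  by rewrite ltnn eqxx -expr2 simplex_a_sqr; field; rewrite nR_neq0 ni1_neq0.
rewrite lt_ij (ltn_eqF lt_ij) mulrA mulrN -expr2 simplex_a_sqr.
by field; rewrite nR_neq0 nk_neq0 ?ni1_neq0.
Qed.

End SimplexEntries.

Arguments simplex_entry {R} n k j.

Section UniformSimplex.
Variables (R : realType) (n : nat).
Hypothesis n_gt0 : (0 < n)%N.
Local Notation d j := (col j (unif_simplex n) : 'cV[R]_n).

Let nR_neq0 : n%:R != 0 :> R. Proof. by rewrite pnatr_eq0 -lt0n. Qed.

Lemma unif_simplex_gram (i j : 'I_n.+1) :
  dotv (d i) (d j) = if i == j then 1 else - 1 / n%:R.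
Proof.
wlog le_ij : i j / (i <= j)%N => [hwlog|].
  by case: (leqP i j) => [|/ltnW] le; [exact: hwlog|rewrite dotvC eq_sym hwlog].
rewrite /dotv; under eq_bigr do rewrite !mxE.
by rewrite simplex_col_dot // -ltnS.
Qed.

Lemma dotv_unif_simplex_colxx j : dotv (d j) (d j) = 1.
Proof. by rewrite unif_simplex_gram eqxx. Qed.

Lemma dotv_unif_simplex_col_neq i j : i != j -> dotv (d i) (d j) = - 1 / n%:R.
Proof. by rewrite unif_simplex_gram => /negbTE ->. Qed.

Lemma unif_simplex_col0 : d ord0 = e1 n.
Proof.
apply/matrixP => k z; rewrite !mxE /=; case: eqP => // ->.
by rewrite /simplex_a subn0 -natr1 divff ?sqrtr1 // mulf_neq0 // natr1 pnatr_eq0.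
Qed.

Lemma sum_unif_simplex_col : \sum_(j < n.+1) d j = 0.
Proof.
apply/matrixP => k z; rewrite summxE mxE.
under eq_bigr do rewrite !mxE.
exact: simplex_row_sum.
Qed.

Lemma sum_unif_simplex_col_lift : \sum_(i < n) d (lift ord0 i) = - d ord0.
Proof.
by apply/eqP; rewrite -addr_eq0 addrC; have := sum_unif_simplex_col; rewrite big_ord_recl => ->.
Qed.

Lemma sum_dotv_unif_simplex_lift (u : 'cV[R]_n) :
  \sum_(i < n) dotv (d (lift ord0 i)) u = - dotv (d ord0) u.
Proof. by rewrite -dotv_suml sum_unif_simplex_col_lift dotvNl. Qed.

Lemma unif_simplex_frame (v : 'cV[R]_n) :
  \sum_(j < n.+1) dotv (d j) v *: d j = ((n%:R + 1) / n%:R) *: v.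
Proof.
apply/matrixP => k z; rewrite ord1 summxE !mxE.
transitivity (\sum_(j < n.+1) \sum_(l < n) v l 0 * (simplex_entry n l j * simplex_entry n k j)).
  apply: eq_bigr => j _; rewrite !mxE /dotv mulr_suml.
  by apply: eq_bigr => l _; rewrite !mxE /simplex_entry; ring.
rewrite exchange_big /=; under eq_bigr do rewrite -mulr_sumr.
rewrite (bigD1 k) //= [X in _ + X]big1 => [|l neq_lk].
  by rewrite simplex_row_dot // eqxx addr0 mulrC.
by rewrite simplex_row_dot // ifN ?mulr0.
Qed.

Lemma sum_sqr_dotv_unif_simplex (u : 'cV[R]_n) :
  \sum_(j < n.+1) dotv (d j) u ^+ 2 = (n%:R + 1) / n%:R * dotv u u.
Proof.
rewrite -dotvZl -unif_simplex_frame dotv_suml; apply: eq_bigr => j _.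
by rewrite dotvZl expr2.
Qed.

Lemma sum_sqr_dotv_unif_simplex_lift (u : 'cV[R]_n) (t := dotv (d ord0) u) :
  \sum_(i < n) (dotv (d (lift ord0 i)) u + t / n%:R) ^+ 2
    = (n%:R + 1) / n%:R * (dotv u u - t ^+ 2).
Proof.
have := sum_sqr_dotv_unif_simplex u; rewrite big_ord_recl -/t => sum_sqr.
under eq_bigr do rewrite sqrrD.
rewrite !big_split /= -mulr_suml -mulr_suml sum_dotv_unif_simplex_lift -/t.
rewrite sumr_const card_ord -mulr_natl.
have -> : \sum_(i < n) dotv (d (lift ord0 i)) u ^+ 2 = (n%:R + 1) / n%:R * dotv u u - t ^+ 2.
  by rewrite -sum_sqr addrC addKr.
by field.
Qed.

End UniformSimplex.

Definition Pdelta_cos (R : realType) (n : nat) (delta : R) : R :=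
  alpha_of n delta * (1 / n%:R - delta).

Section Pdelta.
Variables (R : realType) (n : nat) (delta : R).
Hypotheses (n_gt0 : (0 < n)%N) (delta_ge0 : 0 <= delta) (delta_lt : delta < 1 / n%:R).

Local Notation d j := (col j (unif_simplex n) : 'cV[R]_n).
Local Notation p := (Pdelta_col n delta).
Local Notation alpha := (alpha_of n delta).

Let nR_gt0 : 0 < n%:R :> R. Proof. by rewrite ltr0n. Qed.

Let n_delta_lt1 : n%:R * delta < 1. Proof. by rewrite mulrC -ltr_pdivlMr. Qed.

Let alpha_den_gt0 : 0 < n%:R ^+ 2 * delta ^+ 2 - 2 * n%:R * delta + n%:R ^+ 2.
Proof.
have -> : n%:R ^+ 2 * delta ^+ 2 - 2 * n%:R * delta + n%:R ^+ 2
          = (1 - n%:R * delta) ^+ 2 + (n%:R ^+ 2 - 1) :> R by ring.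
rewrite ltr_pwDl ?exprn_gt0 ?subr_gt0 // subr_ge0 exprn_ege1 //.
by rewrite (ler_nat R 1 n).
Qed.

Lemma alpha_of_gt0 : 0 < alpha.
Proof. by rewrite divr_gt0 ?sqrtr_gt0. Qed.

Lemma alpha_of_sqr : alpha ^+ 2 * (delta ^+ 2 - 2 * delta / n%:R + 1) = 1.
Proof.
rewrite /alpha_of expr_div_n sqr_sqrtr ?ltW //.
by field; rewrite exprMn (lt0r_neq0 alpha_den_gt0) (lt0r_neq0 nR_gt0).
Qed.

Lemma Pdelta_col0 : p ord0 = d ord0.
Proof. by []. Qed.

Lemma Pdelta_col_lift i : p (lift ord0 i) = alpha *: (d (lift ord0 i) + delta *: d ord0).
Proof. by rewrite /Pdelta_col /= unif_simplex_col0. Qed.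

Lemma dotv_Pdelta_col_lift i u :
  dotv (p (lift ord0 i)) u = alpha * (dotv (d (lift ord0 i)) u + delta * dotv (d ord0) u).
Proof. by rewrite Pdelta_col_lift dotvZl dotvDl dotvZl. Qed.

Let lift0_neq0 (k : 'I_n) : lift ord0 k != ord0. Proof. by rewrite eq_sym neq_lift. Qed.

Lemma dotv_Pdelta_colxx j : dotv (p j) (p j) = 1.
Proof.
case: (unliftP ord0 j) => [i ->|->]; last exact: dotv_unif_simplex_colxx.
rewrite dotv_Pdelta_col_lift Pdelta_col_lift !(dotvZr, dotvDr) !dotv_unif_simplex_colxx //.
rewrite !dotv_unif_simplex_col_neq // -[RHS]alpha_of_sqr; ring.
Qed.

Lemma normv_Pdelta_col j : normv (p j) = 1.
Proof. by rewrite /normv dotv_Pdelta_colxx sqrtr1. Qed.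

Lemma dotv_Pdelta_col_le0 i j : i != j -> dotv (p i) (p j) <= 0.
Proof.
have alpha_gt0 := alpha_of_gt0; have delta_le : delta <= 1 / n%:R by apply: ltW.
have dotv_col0_lift k : dotv (p ord0) (p (lift ord0 k)) = alpha * (delta - 1 / n%:R).
  rewrite dotvC dotv_Pdelta_col_lift Pdelta_col0 dotv_unif_simplex_colxx //.
  rewrite dotv_unif_simplex_col_neq //.
  by congr (_ * _); ring.
case: (unliftP ord0 i) => [k ->|->]; case: (unliftP ord0 j) => [m ->|->] //.
- rewrite (inj_eq lift_inj) => neq_km.
  rewrite dotv_Pdelta_col_lift Pdelta_col_lift !(dotvZr, dotvDr) dotv_unif_simplex_colxx //.
  rewrite !dotv_unif_simplex_col_neq ?(inj_eq lift_inj) // mulr_ge0_le0 ?ltW //.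
  have := ler_wpM2l delta_ge0 delta_le; have := delta_ge0.
  have : 0 < 1 / n%:R :> R by rewrite divr_gt0.
  nra.
- by rewrite dotvC dotv_col0_lift pmulr_rle0 // subr_le0.
- by rewrite dotv_col0_lift pmulr_rle0 // subr_le0.
Qed.

Lemma sum_Pdelta_col_lift :
  \sum_(i < n) p (lift ord0 i) = - (alpha * (1 - n%:R * delta)) *: p ord0.
Proof.
rewrite (eq_bigr _ (fun i _ => Pdelta_col_lift i)) -scaler_sumr big_split /=.
rewrite -scaler_suml sumr_const card_ord -[delta *+ n]mulr_natl sum_unif_simplex_col_lift //.
by rewrite -scaleN1r -scalerDl scalerA Pdelta_col0; congr (_ *: _); ring.
Qed.

Lemma Pdelta_spanning v : exists beta : 'I_n.+1 -> R, v = \sum_(j < n.+1) beta j *: p j.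
Proof.
pose gam j := n%:R / (n%:R + 1) * dotv (d j) v.
have vE : v = \sum_(j < n.+1) gam j *: d j.
  rewrite /gam; under eq_bigr do rewrite -scalerA.
  rewrite -scaler_sumr unif_simplex_frame // scalerA -[LHS]scale1r; congr (_ *: _).
  by field; rewrite !lt0r_neq0 // ltr_wpDl.
(* Substitute d_j = p_j / alpha - delta d_0 (j > 0) into the frame expansion. *)
exists (fun j => if j == ord0 then gam ord0 - delta * \sum_(i < n) gam (lift ord0 i)
                 else gam j / alpha).
rewrite vE !big_ord_recl eqxx Pdelta_col0.
under [X in _ = _ + X]eq_bigr => i _ do
  rewrite (negbTE (lift0_neq0 i)) Pdelta_col_lift scalerA divfK ?lt0r_neq0 ?alpha_of_gt0 //.
have -> : \sum_(i < n) gam (lift ord0 i) *: (d (lift ord0 i) + delta *: d ord0) =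
    \sum_(i < n) gam (lift ord0 i) *: d (lift ord0 i)
    + (delta * \sum_(i < n) gam (lift ord0 i)) *: d ord0.
  rewrite mulr_sumr scaler_suml -big_split; apply: eq_bigr => i _ /=.
  by rewrite scalerDr !scalerA mulrC.
by rewrite scalerBl [X in _ = _ + X]addrC addrA subrK.
Qed.

Lemma Pdelta_positive_basis : positive_basis p.
Proof.
split=> [|i].
  pose gam (j : 'I_n.+1) := if j == ord0 then alpha * (1 - n%:R * delta) else 1.
  apply: (pos_spanT_of_pos_relation (gam := gam) Pdelta_spanning) => [j|].
    by rewrite /gam; case: eqP => // _; rewrite mulr_gt0 ?alpha_of_gt0 ?subr_gt0.
  rewrite big_ord_recl /gam eqxx.
  under eq_bigr => j _ do rewrite (negbTE (lift0_neq0 j)) scale1r.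
  by rewrite sum_Pdelta_col_lift scaleNr addrN.
apply: not_pos_span_of_obtuse => [j|]; first by rewrite eq_sym; apply: dotv_Pdelta_col_le0.
by rewrite dotv_Pdelta_colxx ltr01.
Qed.

Lemma cos_max_PdeltaE u :
  cos_max p u = \big[Num.max/dotv (p ord0) u]_(j < n.+1) dotv (p j) u.
Proof.
rewrite /cos_max normv_Pdelta_col divr1.
by under eq_bigr do rewrite normv_Pdelta_col divr1.
Qed.

Local Notation cosP := (Pdelta_cos n delta).

Lemma Pdelta_cos_gt0 : 0 < cosP.
Proof. by rewrite mulr_gt0 ?alpha_of_gt0 ?subr_gt0. Qed.

Lemma alpha_of_sqr_Pdelta_cos : alpha ^+ 2 * (n%:R ^+ 2 - 1) = n%:R ^+ 2 * (1 - cosP ^+ 2).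
Proof.
rewrite /Pdelta_cos -[X in _ = _ * (X - _)]alpha_of_sqr.
by field; rewrite lt0r_neq0.
Qed.

Lemma n_mul_Pdelta_cos_le1 : n%:R * cosP <= 1.
Proof.
have -> : n%:R * cosP = alpha * (1 - n%:R * delta).
  by rewrite /Pdelta_cos; field; rewrite lt0r_neq0.
have n_delta_ge0 : 0 <= n%:R * delta by rewrite mulr_ge0 ?ler0n.
have s_ge0 : 0 <= 1 - n%:R * delta by rewrite subr_ge0 ltW.
rewrite -(@expr_le1 _ 2) ?(mulr_ge0 (ltW alpha_of_gt0)) //.
rewrite exprMn -[X in _ <= X]alpha_of_sqr ler_wpM2l ?sqr_ge0 // -subr_ge0.
have -> : delta ^+ 2 - 2 * delta / n%:R + 1 - (1 - n%:R * delta) ^+ 2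
          = (n%:R ^+ 2 - 1) * delta * (2 / n%:R - delta) by field; rewrite lt0r_neq0.
rewrite !mulr_ge0 // ?subr_ge0 ?exprn_ege1 ?ler1n //.
by apply: le_trans (ltW delta_lt) _; rewrite ler_pM2r ?invr_gt0 // ler1n.
Qed.

Lemma cos_max_Pdelta_opp_col0 : cos_max p (- d ord0) = cosP.
Proof.
have cosP_lift i : dotv (p (lift ord0 i)) (- d ord0) = cosP.
  rewrite dotv_Pdelta_col_lift !dotvNr dotv_unif_simplex_colxx //.
  by rewrite dotv_unif_simplex_col_neq // /Pdelta_cos; congr (_ * _); ring.
rewrite cos_max_PdeltaE Pdelta_col0 dotvNr dotv_unif_simplex_colxx //.
apply/le_anti/andP; split; last by rewrite -(cosP_lift (Ordinal n_gt0)) le_bigmax.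
have cosP_geN1 : -1 <= cosP by apply: le_trans (lerN10 _) (ltW Pdelta_cos_gt0).
apply: bigmax_le => // j _; case: (unliftP ord0 j) => [i ->|->]; first by rewrite cosP_lift.
by rewrite dotvNr dotv_unif_simplex_colxx.
Qed.

Lemma dotv_Pdelta_shift i u :
  dotv (p (lift ord0 i)) u + cosP * dotv (p ord0) u
    = alpha * (dotv (d (lift ord0 i)) u + dotv (d ord0) u / n%:R).
Proof. by rewrite dotv_Pdelta_col_lift Pdelta_col0 /Pdelta_cos; field; rewrite lt0r_neq0. Qed.

Lemma sum_dotv_Pdelta_shift u :
  \sum_(i < n) (dotv (p (lift ord0 i)) u + cosP * dotv (p ord0) u) = 0.
Proof.
under eq_bigr do rewrite dotv_Pdelta_shift.
rewrite -mulr_sumr big_split /= sum_dotv_unif_simplex_lift // sumr_const card_ord.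
by rewrite -[_ / _ *+ _]mulr_natl mulrCA divff ?mulr1 ?addNr ?mulr0 // lt0r_neq0.
Qed.

Lemma sum_sqr_dotv_Pdelta_shift u : normv u = 1 ->
  \sum_(i < n) (dotv (p (lift ord0 i)) u + cosP * dotv (p ord0) u) ^+ 2
    = alpha ^+ 2 * ((n%:R + 1) / n%:R * (1 - dotv (p ord0) u ^+ 2)).
Proof.
move=> u_unit; under eq_bigr do rewrite dotv_Pdelta_shift exprMn.
by rewrite -mulr_sumr sum_sqr_dotv_unif_simplex_lift // dotvvE u_unit expr1n.
Qed.

Lemma Pdelta_shift_bound_lt t : (1 < n)%N -> -1 < t -> t < cosP ->
  n%:R * (n%:R - 1) * (cosP * (1 + t)) ^+ 2 < alpha ^+ 2 * ((n%:R + 1) / n%:R * (1 - t ^+ 2)).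
Proof.
move=> n_gt1 t_gtN1 t_lt.
have nR_neq1 : n%:R - 1 != 0 :> R by rewrite subr_eq0 pnatr_eq1 gtn_eqF.
have one_sub_cosP2 : 1 - cosP ^+ 2 = alpha ^+ 2 * (n%:R ^+ 2 - 1) / n%:R ^+ 2.
  by rewrite alpha_of_sqr_Pdelta_cos; field; rewrite lt0r_neq0.
have -> : n%:R * (n%:R - 1) * (cosP * (1 + t)) ^+ 2
          = ((n%:R - 1) * cosP * (1 + t)) ^+ 2 * (n%:R / (n%:R - 1)).
  by field.
have -> : alpha ^+ 2 * ((n%:R + 1) / n%:R * (1 - t ^+ 2))
          = (1 - t ^+ 2) * (1 - cosP ^+ 2) * (n%:R / (n%:R - 1)).
  by rewrite one_sub_cosP2; field; rewrite nR_neq1 lt0r_neq0.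
rewrite ltr_pM2r ?divr_gt0 ?subr_gt0 ?ltr1n //.
by apply: cos_measure_ineq; rewrite ?Pdelta_cos_gt0 ?n_mul_Pdelta_cos_le1 ?(ler_nat R 2 n).
Qed.

Lemma cos_max_Pdelta_ge u : (1 < n)%N -> normv u = 1 -> cosP <= cos_max p u.
Proof.
move=> n_gt1 u_unit; rewrite leNgt cos_max_PdeltaE; apply/negP => /bigmax_ltP[t_lt lt_cosP].
set t := dotv (p ord0) u in t_lt.
pose y (i : 'I_n) := dotv (p (lift ord0 i)) u + cosP * t.
have y_lt i : y i < cosP * (1 + t) by rewrite /y [X in _ < X]mulrDr mulr1 ltrD2r lt_cosP.
have sum_y : \sum_(i < n) y i = 0 by exact: sum_dotv_Pdelta_shift.
have t_gtN1 : -1 < t.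
  have : \sum_(i < n) y i < \sum_(i < n) cosP * (1 + t).
    apply: ltr_sum => [|i _]; last exact: y_lt.
    by apply/hasP; exists (Ordinal n_gt0); first exact: mem_index_enum.
  rewrite sum_y sumr_const card_ord pmulrn_lgt0 // pmulr_rgt0 ?Pdelta_cos_gt0 //.
  lra.
have := sum_sqr_le_of_sum_eq0 (fun i => ltW (y_lt i)) sum_y.
by rewrite sum_sqr_dotv_Pdelta_shift // leNgt Pdelta_shift_bound_lt.
Qed.

Lemma Pdelta_cosine_measure : (1 < n)%N -> cosine_measure_is p cosP.
Proof.
move=> n_gt1; split; last by move=> u; apply: cos_max_Pdelta_ge.
exists (- d ord0); split; last exact: cos_max_Pdelta_opp_col0.
by rewrite /normv dotvNl dotvNr opprK dotv_unif_simplex_colxx // sqrtr1.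
Qed.

End Pdelta.

Section DeltaOf.
Variables (R : realType) (n : nat) (c : R).
Hypotheses (n_gt1 : (1 < n)%N) (c_gt0 : 0 < c) (c_lt1 : c < 1).

Let N_gt1 : 1 < n%:R :> R. Proof. by rewrite ltr1n. Qed.

Let one_sub_c2_gt0 : 0 < 1 - c ^+ 2. Proof. by rewrite subr_gt0 exprn_ilt1 ?ltW. Qed.

Let N2_sub1_gt0 : 0 < n%:R ^+ 2 - 1 :> R. Proof. by rewrite subr_gt0 exprn_egt1. Qed.

(* [cos_kappa] is [n / alpha_of n (delta_of n c)], and
   [delta_of n c = (1 - c * cos_kappa) / n]. *)
Definition cos_kappa : R := Num.sqrt ((n%:R ^+ 2 - 1) / (1 - c ^+ 2)).

Lemma cos_kappa_gt0 : 0 < cos_kappa.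
Proof. by rewrite sqrtr_gt0 divr_gt0. Qed.

Lemma cos_kappa_sqr : cos_kappa ^+ 2 = (n%:R ^+ 2 - 1) / (1 - c ^+ 2).
Proof. by rewrite sqr_sqrtr // ltW // divr_gt0. Qed.

Lemma delta_ofE : delta_of n c = (1 - c * cos_kappa) / n%:R.
Proof.
rewrite /delta_of; have -> : - ((n%:R ^+ 2 - 1) * (c ^+ 4 - c ^+ 2))
          = (c * (1 - c ^+ 2)) ^+ 2 * ((n%:R ^+ 2 - 1) / (1 - c ^+ 2)) :> R.
  by field; rewrite lt0r_neq0.
rewrite sqrtrM ?sqr_ge0 // sqrtr_sqr -/cos_kappa ger0_norm; last first.
  by rewrite mulr_ge0 ?ltW.
have c2_sub1_neq0 : c ^+ 2 - 1 != 0 by rewrite -opprB oppr_eq0 lt0r_neq0.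
by field; rewrite c2_sub1_neq0 pnatr_eq0 gtn_eqF // ltnW.
Qed.

Lemma alpha_of_delta_of : alpha_of n (delta_of n c) = n%:R / cos_kappa.
Proof.
rewrite /alpha_of /cos_kappa -cos_kappa_sqr delta_ofE; congr (_ / Num.sqrt _).
transitivity (c ^+ 2 * cos_kappa ^+ 2 + n%:R ^+ 2 - 1).
  by field; rewrite pnatr_eq0 gtn_eqF // ltnW.
by rewrite cos_kappa_sqr; field; rewrite lt0r_neq0.
Qed.

Lemma mul_cos_kappa_le1 : n%:R * c <= 1 -> c * cos_kappa <= 1.
Proof.
move=> Nc_le1; have Nc_ge0 : 0 <= n%:R * c by rewrite mulr_ge0 ?ler0n ?ltW.
have ck_ge0 : 0 <= c * cos_kappa by rewrite mulr_ge0 ?ltW ?cos_kappa_gt0.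
have : (c * cos_kappa) ^+ 2 <= 1.
  rewrite exprMn cos_kappa_sqr mulrA ler_pdivrMr // mul1r.
  have : (n%:R * c) ^+ 2 <= 1 by rewrite expr_le1.
  by rewrite exprMn; lra.
by rewrite expr_le1.
Qed.

Lemma delta_of_lt : delta_of n c < 1 / n%:R.
Proof.
rewrite delta_ofE ltr_pM2r ?invr_gt0 ?ltr0n 1?ltnW // gtrBl.
by rewrite mulr_gt0 ?cos_kappa_gt0.
Qed.

Lemma delta_of_ge0 : n%:R * c <= 1 -> 0 <= delta_of n c.
Proof.
by move=> Nc_le1; rewrite delta_ofE divr_ge0 ?ler0n // subr_ge0 mul_cos_kappa_le1.
Qed.

Lemma Pdelta_cos_delta_of : Pdelta_cos n (delta_of n c) = c.
Proof.
rewrite /Pdelta_cos alpha_of_delta_of delta_ofE; field.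
by rewrite pnatr_eq0 gtn_eqF 1?ltnW // lt0r_neq0 ?cos_kappa_gt0.
Qed.

End DeltaOf.

Theorem corollary2 (R : realType) (n : nat) (c : R) :
  (2 <= n)%N -> 0 < c -> c <= 1 / n%:R ->
  let delta := delta_of n c in
  0 <= delta /\ delta < 1 / n%:R /\
  positive_basis (Pdelta_col n delta) /\
  cosine_measure_is (Pdelta_col n delta) c.
Proof.
move=> n_ge2 c_gt0 c_le delta.
have n_gt0 : (0 < n)%N by apply: ltnW.
have Nc_le1 : n%:R * c <= 1 by rewrite mulrC -ler_pdivlMr // ltr0n.
have c_lt1 : c < 1.
  have : 2 <= n%:R :> R by rewrite (ler_nat R 2 n).
  nra.
have delta_ge0 : 0 <= delta by apply: delta_of_ge0.
have delta_lt : delta < 1 / n%:R by apply: delta_of_lt.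
split=> //; split=> //; split; first exact: Pdelta_positive_basis.
by rewrite -{1}(Pdelta_cos_delta_of n_ge2 c_gt0 c_lt1); apply: Pdelta_cosine_measure.
Qed.
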